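(* Let $q\in\mathbb{C}^{\ast}$ not a root of unity, $R=\mathbb{C}[[z]]$, $F=\mathbb{C}((z))$. Let $V$ be an object of ${\cal B}^{al}_q$, let $L\subset V$ be a $\xi$-invariant $R$-lattice (not necessarily $\xi^{-1}$-invariant), let $\overline L=L/zL$ with the $\mathbb{C}$-linear operator induced by $\xi$, and let $\overline P\subset\overline L$ be a $\xi$-invariant subspace such that for every eigenvalue $\alpha$ of $\xi$ on $\overline P$ and every integer $n\neq0$, the number $q^n\alpha$ is not an eigenvalue of $\xi$ on $\overline L$. Then the embedding $\overline P\hookrightarrow\overline L$ has a $\mathbb{C}[\xi]$-equivariant lifting $\overline P\to L$, i.e. a $\mathbb{C}$-linear map commuting with $\xi$ whose composition with $L\to L/zL$ is the inclusion.
   Context: ${\cal B}^{al}_q$ is the category of finite-dimensional $F$-vector spaces $V$ equipped with a semi-linear automorphism $\xi$, $\xi(f(z)v)=f(qz)\xi(v)$. An $R$-lattice in $V$ is a finitely generated $R$-submodule spanning $V$ over $F$. Since $\xi(zL)=qz\xi(L)\subset zL$, $\xi$ induces a $\mathbb{C}$-linear operator on $L/zL$. *)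

From HB Require Import structures.
From mathcomp Require Import all_boot all_order all_algebra.
From mathcomp Require Import complex.
From mathcomp Require Export reals.
Set Implicit Arguments. Unset Strict Implicit. Unset Printing Implicit Defensive.
Import Order.TTheory GRing.Theory Num.Theory.
Local Open Scope ring_scope.

(* Elements of R = C[[z]] are coefficient sequences f : nat -> K,
   f = \sum_k f k z^k. *)

Definition psmul (K : fieldType) (f g : nat -> K) : nat -> K :=
  fun k => \sum_(m < k.+1) f m * g (k - m)%N.

(* The q-twist sigma_q : f(z) |-> f(qz). *)
Definition qtwist (K : fieldType) (q : K) (f : nat -> K) : nat -> K :=
  fun k => q ^+ k * f k.

(* Coordinates: L = R^n with R-basis e_0..e_{n-1}; the semilinear operator
   xi is determined by xi(e_i) = \sum_j A i j e_j, hence for v = \sum_i v_i e_i,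
   xi(v)_j = \sum_i v_i(qz) * A i j. *)
Definition lat_xi (K : fieldType) (n : nat) (q : K)
  (A : 'I_n -> 'I_n -> nat -> K) (v : 'I_n -> nat -> K) : 'I_n -> nat -> K :=
  fun j k => \sum_(i < n) psmul (qtwist q (v i)) (A i j) k.

(* The induced C-linear operator on Lbar = L/zL = K^n (row vectors):
   ubar |-> ubar *m reduce_mx A. *)
Definition reduce_mx (K : fieldType) (n : nat) (A : 'I_n -> 'I_n -> nat -> K)
  : 'M[K]_n := \matrix_(i, j) A i j 0%N.

(* xi is an automorphism of V = F^n (F = K((z))) iff A is invertible over F,
   i.e. A * B = z^N * I for some matrix B over K[[z]] and some N. *)
Definition invertible_over_F (K : fieldType) (n : nat)
  (A : 'I_n -> 'I_n -> nat -> K) : Prop :=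
  exists (B : 'I_n -> 'I_n -> nat -> K) (N : nat),
    forall i j k, \sum_(l < n) psmul (A i l) (B l j) k
                  = ((i == j) && (k == N))%:R.

(* Choose a basis Pb of P and let B be the matrix of xi on P in that basis.
   A lifting is then u |-> (coordinates of u) * X(z) for a power series
   X(z) = \sum_k X_k z^k of matrices with X_0 = Pb and B X(z) = X(qz) A(z).
   Comparing coefficients of z^k, X_k must solve the Sylvester equation
   B X_k - X_k (q^k A_0) = \sum_(j < k) q^j X_j A_(k-j), which is uniquely
   solvable for k > 0 because the eigenvalues of B (those of xi on P) are
   disjoint from those of q^k A_0: this is the hypothesis on q^n alpha.
   Disjointness makes X |-> B X - X M injective by Cayley-Hamilton:
   B X = X M forces chi_M(B) X = X chi_M(M) = 0, and chi_M(B) is invertible. *)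

From HB Require Import structures.
From mathcomp Require Import all_boot all_order all_algebra.
From mathcomp Require Import complex reals boolp.
Import Order.TTheory GRing.Theory Num.Theory.

Set Implicit Arguments.
Unset Strict Implicit.
Unset Printing Implicit Defensive.

Local Open Scope ring_scope.

Lemma horner_mx_intertwine (R : comNzRingType) r n (B : 'M[R]_r.+1)
    (M : 'M[R]_n.+1) (X : 'M[R]_(r.+1, n.+1)) p :
  B *m X = X *m M -> horner_mx B p *m X = X *m horner_mx M p.
Proof.
move=> BX; elim/poly_ind: p => [|p c IHp].
  by rewrite !rmorph0 mul0mx mulmx0.
rewrite !rmorphD !rmorphM /= !horner_mx_X !horner_mx_C -!mulmxE.
rewrite mulmxDl mulmxDr -mulmxA BX mulmxA IHp -mulmxA.
by rewrite mul_scalar_mx mul_mx_scalar.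
Qed.

Lemma intertwining_mx_eq0 (F : closedFieldType) r n (B : 'M[F]_r)
    (M : 'M[F]_n) (X : 'M[F]_(r, n)) :
  (forall z, eigenvalue M z -> ~~ eigenvalue B z) -> B *m X = X *m M -> X = 0.
Proof.
case: r B X => [|r] B X; first by rewrite [X]flatmx0.
case: n M X => [|n] M X spectra_disjoint BX; first by rewrite [X]thinmx0.
have [rs Drs] := closed_field_poly_normal (char_poly M).
rewrite (monicP (char_poly_monic M)) scale1r in Drs.
have unit_charM_B : horner_mx B (char_poly M) \in unitmx.
  rewrite Drs rmorph_prod; apply: unitr_prod_in => z z_rs _.
  have /spectra_disjoint : eigenvalue M z.
    by rewrite eigenvalue_root_char Drs root_prod_XsubC.
  rewrite rmorphB /= horner_mx_X horner_mx_C.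
  by rewrite /eigenvalue /eigenspace negbK -row_free_unit -kermx_eq0.
rewrite -(mulKmx unit_charM_B X) (horner_mx_intertwine _ BX).
by rewrite Cayley_Hamilton !mulmx0.
Qed.

Lemma eigenvalue_scale (F : fieldType) n (M : 'M[F]_n) a z : a != 0 ->
  eigenvalue (a *: M) z = eigenvalue M (a^-1 * z).
Proof.
move=> a_neq0; apply/eigenvalueP/eigenvalueP => -[v Mv v_neq0]; exists v => //.
  by rewrite -scalerA -Mv -scalemxAr scalerA mulVf ?scale1r.
by rewrite -scalemxAr Mv scalerA mulrA divff ?mul1r.
Qed.

Section Sylvester.
Variables (F : fieldType) (r n : nat) (B : 'M[F]_r) (M : 'M[F]_n).

Definition sylvester_mx : 'M[F]_(r * n) := lin_mulmx B - lin_mulmxr M.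

Lemma mul_sylvester_mx X : mxvec X *m sylvester_mx = mxvec (B *m X - X *m M).
Proof. by rewrite mulmxBr !mul_vec_lin linearB. Qed.

Definition sylvester_solve (C : 'M[F]_(r, n)) : 'M[F]_(r, n) :=
  vec_mx (mxvec C *m invmx sylvester_mx).

Hypothesis sylvester_inj : forall X, B *m X = X *m M -> X = 0.

Lemma sylvester_mx_unit : sylvester_mx \in unitmx.
Proof.
rewrite -row_free_unit -kermx_eq0; apply/eqP/row_matrixP => i.
rewrite row0 -[row i _]vec_mxK; apply/eqP; rewrite mxvec_eq0; apply/eqP.
apply: sylvester_inj; apply/eqP; rewrite -subr_eq0 -mxvec_eq0.
by rewrite -mul_sylvester_mx vec_mxK -row_mul mulmx_ker row0.
Qed.

Lemma sylvester_solveP C :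
  B *m sylvester_solve C - sylvester_solve C *m M = C.
Proof.
apply: (can_inj mxvecK).
by rewrite -mul_sylvester_mx vec_mxK mulmxKV ?sylvester_mx_unit.
Qed.

End Sylvester.

Section TwistedIntertwiner.
Variables (K : fieldType) (r n : nat) (q : K).
Variables (B : 'M[K]_r) (A : nat -> 'M[K]_n) (X0 : 'M[K]_(r, n)).

Definition next_intertwiner_coef (X : nat -> 'M[K]_(r, n)) k :=
  sylvester_solve B (q ^+ k *: A 0%N)
    (\sum_(j < k) q ^+ j *: (X j *m A (k - j)%N)).

Fixpoint intertwiner_upto k : nat -> 'M[K]_(r, n) :=
  if k is k'.+1 then
    fun m => if m == k then next_intertwiner_coef (intertwiner_upto k') k
             else intertwiner_upto k' m
  else fun _ => X0.

Definition intertwiner k := intertwiner_upto k k.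

Lemma intertwiner_uptoE k m :
  (m <= k)%N -> intertwiner_upto k m = intertwiner m.
Proof.
move=> le_mk; rewrite -(subnKC le_mk); elim: (k - m)%N => [|d IHd].
  by rewrite addn0.
by rewrite addnS /= ifN // neq_ltn ltnS leq_addr.
Qed.

Hypothesis X0_intertwines : B *m X0 = X0 *m A 0%N.
Hypothesis sylvester_inj :
  forall k, (0 < k)%N -> forall X, B *m X = X *m (q ^+ k *: A 0%N) -> X = 0.

Lemma intertwinerP k :
  B *m intertwiner k = \sum_(j < k.+1) q ^+ j *: (intertwiner j *m A (k - j)%N).
Proof.
case: k => [|k]; first by rewrite big_ord1 expr0 scale1r; exact: X0_intertwines.
rewrite big_ord_recr /= subnn scalemxAr.
set C := \sum_(j < k.+1) _.
have -> : intertwiner k.+1 = sylvester_solve B (q ^+ k.+1 *: A 0%N) C.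
  rewrite /intertwiner /= eqxx; congr sylvester_solve; apply: eq_bigr => j _.
  by rewrite intertwiner_uptoE // -ltnS.
by apply/eqP; rewrite -subr_eq (sylvester_solveP (sylvester_inj (ltn0Sn k))).
Qed.

End TwistedIntertwiner.

Section Restriction.
Variables (F : fieldType) (m n : nat) (V : 'M[F]_(m, n)) (f : 'M[F]_n).
Hypothesis V_stable : stablemx V f.

Lemma restrictmx_row_base : restrictmx V f *m row_base V = row_base V *m f.
Proof. by rewrite mulmxKpV ?stablemx_row_base. Qed.

Lemma restrictmx_pinvmx (u : 'rV[F]_n) : (u <= V)%MS ->
  u *m f *m pinvmx (row_base V) = u *m pinvmx (row_base V) *m restrictmx V f.
Proof.
move=> uV; have uVb : (u <= row_base V)%MS by rewrite eq_row_base.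
apply: (row_free_inj (row_base_free V)).
rewrite -[RHS]mulmxA restrictmx_row_base mulmxA !mulmxKpV //.
by apply: submx_trans (submxMr f uVb) _; rewrite stablemx_row_base.
Qed.

Lemma eigenvalue_restrictmxP z : eigenvalue (restrictmx V f) z ->
  exists u : 'rV[F]_n, [/\ u != 0, (u <= V)%MS & u *m f = z *: u].
Proof.
case/eigenvalueP => w /eigenspaceP.
rewrite sub_eigenspace_conjmx ?row_base_free ?stablemx_row_base //.
move=> /eigenspaceP wf w_neq0; exists (w *m row_base V); split => //.
- by rewrite mulmx_free_eq0 ?row_base_free.
- by rewrite -(eq_row_base V) submxMl.
Qed.

End Restriction.

Definition coef_mx (K : fieldType) n (A : 'I_n -> 'I_n -> nat -> K) k :
  'M[K]_n :=
  \matrix_(i, j) A i j k.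

Lemma lat_xi_mx (K : fieldType) n (q : K) (A : 'I_n -> 'I_n -> nat -> K)
    (w : nat -> 'rV[K]_n) :
  lat_xi q A (fun j k => w k 0 j)
  = fun j k => (\sum_(m < k.+1) q ^+ m *: (w m *m coef_mx A (k - m)%N)) 0 j.
Proof.
apply/funext => j; apply/funext => k.
rewrite /lat_xi /psmul /qtwist summxE exchange_big /=; apply: eq_bigr => m _.
rewrite !mxE mulr_sumr; apply: eq_bigr => i _.
by rewrite !mxE mulrA.
Qed.

Theorem lemma6 (R : realType) (q : R[i]) (n : nat)
  (A : 'I_n -> 'I_n -> nat -> R[i]) (P : 'M[R[i]]_n) :
  q != 0 ->
  (forall m : nat, (0 < m)%N -> q ^+ m != 1) ->
  invertible_over_F A ->
  stablemx P (reduce_mx A) ->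
  (forall (alpha : R[i]) (u : 'rV[R[i]]_n),
      u != 0 -> (u <= P)%MS -> u *m reduce_mx A = alpha *: u ->
      forall m : int, m != 0 -> ~~ eigenvalue (reduce_mx A) (q ^ m * alpha)) ->
  exists s : 'rV[R[i]]_n -> ('I_n -> nat -> R[i]),
    [/\ forall (a : R[i]) (u v : 'rV[R[i]]_n), (u <= P)%MS -> (v <= P)%MS ->
          s (a *: u + v) = (fun j k => a * s u j k + s v j k),
        forall u, (u <= P)%MS -> s (u *m reduce_mx A) = lat_xi q A (s u)
      & forall u, (u <= P)%MS -> forall j, s u j 0%N = u 0 j].
Proof.
move=> q_neq0 _ _ P_stable spectral_gap.
set A0 := reduce_mx A in P_stable spectral_gap *.
set Pb := row_base P.
set B := restrictmx P A0.
have sylvester_inj k : (0 < k)%N ->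
    forall X, B *m X = X *m (q ^+ k *: A0) -> X = 0.
  move=> k_gt0 X; apply: intertwining_mx_eq0 => z.
  rewrite eigenvalue_scale ?expf_neq0 // => A0_z; apply/negP.
  case/(eigenvalue_restrictmxP P_stable) => u [u_neq0 uP uA0].
  have Nk_neq0 : - k%:Z != 0 by rewrite oppr_eq0 eqz_nat -lt0n.
  have := spectral_gap z u u_neq0 uP uA0 _ Nk_neq0.
  by rewrite -invr_expz A0_z.
pose X := intertwiner q B (coef_mx A) Pb.
have XP := intertwinerP (A := coef_mx A)
  (restrictmx_row_base P_stable) sylvester_inj.
exists (fun u j k => (u *m pinvmx Pb *m X k) 0 j); split.
- move=> a u v _ _; apply/funext => j; apply/funext => k.
  by rewrite !mulmxDl -!scalemxAl !mxE.
- move=> u uP; rewrite lat_xi_mx; apply/funext => j; apply/funext => k.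
  rewrite restrictmx_pinvmx // -mulmxA XP mulmx_sumr.
  congr (fun_of_matrix _ 0 j); apply: eq_bigr => m _.
  by rewrite -scalemxAr mulmxA.
- by move=> u uP j; rewrite /= mulmxKpV ?eq_row_base.
Qed.
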